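(* Let $X$ be a compactum, let $n\geq2$, and let $f:X\to X$ be a function. Consider the statements: (1) $f$ is $TT_{++}$; (2) $F_n(f)$ is $TT_{++}$; (3) $SF_n(f)$ is $TT_{++}$. Then (2) and (3) are equivalent and (2) implies (1). Moreover, (1) does not imply (2) in general: there exist such $X$, $n$, $f$ with $f$ being $TT_{++}$ but $F_n(f)$ not $TT_{++}$.
   Context: A compactum is a nondegenerate compact, perfect, Hausdorff topological space. $F_n(X)$ is the set of nonempty subsets of $X$ with at most $n$ points, with the Vietoris topology; $F_1(X)=\{\{x\}:x\in X\}$; $F_n(f)(A)=f(A)$. $SF_n(X)=F_n(X)/F_1(X)$ is the quotient collapsing $F_1(X)$ to a point, $q$ the quotient map, $F_X=q(F_1(X))$, and $SF_n(f)(\chi)=q(F_n(f)(q^{-1}(\chi)))$ for $\chi\neq F_X$, $SF_n(f)(F_X)=F_X$. A function $g:Z\to Z$ is $TT_{++}$ if for every pair of nonempty open $U,V\subseteq Z$ the set $\{k\in\mathbb{N}: U\cap g^{-k}(V)\neq\emptyset\}$ is infinite. *)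

From HB Require Import structures.
From mathcomp Require Import all_boot all_order all_algebra generic_quotient.
From mathcomp Require Import all_classical all_reals.
From mathcomp Require Import topology_structure quotient_topology separation_axioms compact.
Set Implicit Arguments. Unset Strict Implicit. Unset Printing Implicit Defensive.
Local Open Scope classical_set_scope.
Local Open Scope quotient_scope.

Definition compactum (X : topologicalType) : Prop :=
  [/\ compact [set: X], hausdorff_space X, perfect_set [set: X] &
      exists x y : X, x <> y].

Definition TTpp (Z : topologicalType) (g : Z -> Z) : Prop :=
  forall U V : set Z, open U -> open V -> U !=set0 -> V !=set0 ->
    infinite_set [set k : nat | (0 < k)%N /\ (U `&` (iter k g) @^-1` V) !=set0].

Definition is_Fn (X : eqType) (n : nat) (A : set X) : Prop :=
  A !=set0 /\ exists s : seq X, (size s <= n)%N /\ A = [set` s].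

Definition Fn (X : topologicalType) (n : nat) : Type := {A : set X | is_Fn n A}.

HB.instance Definition _ (X : topologicalType) n := gen_eqMixin (Fn X n).
HB.instance Definition _ (X : topologicalType) n := gen_choiceMixin (Fn X n).

(* Vietoris topology: subbase { A | A ⊆ U } and { A | A ∩ U ≠ ∅ }, U open *)
Definition vietoris_D (X : topologicalType) : set (bool * set X) :=
  [set i | open i.2].
Definition vietoris_b (X : topologicalType) n (i : bool * set X) : set (Fn X n) :=
  if i.1 then [set A | proj1_sig A `<=` i.2]
  else [set A | (proj1_sig A `&` i.2) !=set0].

HB.instance Definition _ (X : topologicalType) n :=
  isSubBaseTopological.Build (Fn X n) (@vietoris_D X) (@vietoris_b X n).

Lemma is_Fn_image (X Y : eqType) n (f : X -> Y) (A : set X) :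
  is_Fn n A -> is_Fn n (f @` A).
Proof.
move=> [[x Ax] [s [hs eA]]]; split; first by exists (f x); exists x.
rewrite eA.
exists (map f s); split; first by rewrite size_map.
apply/seteqP; split=> y /=.
  by case=> z /= zs <-; apply: map_f.
by move=> /mapP [z zs ->]; exists z.
Qed.

Definition Fnf (X : topologicalType) n (f : X -> X) (A : Fn X n) : Fn X n :=
  exist _ (f @` proj1_sig A) (is_Fn_image f (proj2_sig A)).

Definition in_F1 (X : topologicalType) n (A : Fn X n) : Prop :=
  exists x : X, proj1_sig A = [set x].

Definition collapse_rel (X : topologicalType) n : rel (Fn X n) :=
  fun A B => `[< A = B \/ (in_F1 A /\ in_F1 B) >].

Lemma collapse_refl (X : topologicalType) n : reflexive (@collapse_rel X n).
Proof. by move=> A; apply/asboolP; left. Qed.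

Lemma collapse_sym (X : topologicalType) n : symmetric (@collapse_rel X n).
Proof.
move=> A B; apply/idP/idP => /asboolP [->|[h1 h2]]; apply/asboolP;
  by [left|right].
Qed.

Lemma collapse_trans (X : topologicalType) n : transitive (@collapse_rel X n).
Proof.
move=> B A C /asboolP [->//|[h1 h2]] /asboolP [<-|[_ h3]]; apply/asboolP;
  by right.
Qed.

Definition collapse_equiv_rel (X : topologicalType) n : equiv_rel (Fn X n) :=
  EquivRel (@collapse_rel X n) (@collapse_refl X n) (@collapse_sym X n)
    (@collapse_trans X n).

Definition SFn (X : topologicalType) n : Type :=
  quotient_topology {eq_quot (@collapse_equiv_rel X n)}.
HB.instance Definition _ (X : topologicalType) n := Topological.on (SFn X n).

(* SF_n(f): F_X is fixed; otherwise chi = q(A) for a unique A, sent to q(f(A)) *)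
Definition SFnf (X : topologicalType) n (f : X -> X) (chi : SFn X n) : SFn X n :=
  if `[< in_F1 (repr chi) >] then chi
  else \pi_(SFn X n) (Fnf f (repr chi)).

From mathcomp Require Import all_boot generic_quotient.
From mathcomp Require Import all_classical finmap.
From mathcomp Require Import topology cantor.
From mathcomp Require Import zify.

(* The quotient map q semiconjugates F_n(f) to SF_n(f) and is injective off
   F_1(X).  Since X is Hausdorff, F_1(X) is closed, so q is an open embedding
   on its complement; since X is perfect and n >= 2, every nonempty open set of
   F_n(X) meets that complement.  Hence open sets on either side can be shrunk
   off F_1(X) and hitting times transfer in both directions.  The Vietoris sets
   <U> = {A | A ⊆ U} give F_n(f) TT_{++} => f TT_{++}.
   For the converse failure take the Cantor space and the map that flips the
   first coordinate and shifts the remaining ones: the shift lets any cylinder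
   reach any other at all large times of either parity, but every iterate moves
   a whole set into a single first-coordinate cylinder, so {A | A ⊆ [0]} never
   reaches {A | A meets both [0] and [1]}. *)

Set Implicit Arguments.
Unset Strict Implicit.
Unset Printing Implicit Defensive.

Local Open Scope classical_set_scope.
Local Open Scope quotient_scope.

Lemma infinite_set_unbounded (S : set nat) :
  (forall N, exists2 k, (N < k)%N & S k) -> infinite_set S.
Proof.
move=> unbS /finite_fsetP [B eB].
have [k Nk Sk] := unbS (\max_(i <- B) i)%N.
have kB : k \in B by rewrite eB in Sk.
by have := leq_bigmax_seq (P := xpredT) (F := id) k kB isT; rewrite leqNgt Nk.
Qed.

Section Vietoris.
Variables (X : topologicalType) (n : nat).

Lemma vietoris_b_open (i : bool * set X) : open i.2 -> open (@vietoris_b X n i).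
Proof.
move=> oi; exists [set @vietoris_b X n i]; first by move=> _ ->; apply: finI_from1.
by rewrite bigcup_set1.
Qed.

Lemma is_Fn_seq (s : seq X) : s != [::] -> (size s <= n)%N -> is_Fn n [set` s].
Proof.
case: s => [//|x s] _ hs; split; first by exists x; rewrite /= inE eqxx.
by exists (x :: s).
Qed.

Lemma iter_Fnf (f : X -> X) k (A : Fn X n) :
  proj1_sig (iter k (Fnf f) A) = iter k f @` proj1_sig A.
Proof. by elim: k => [|k /= ->]; rewrite ?image_id ?image_comp. Qed.

Lemma TTpp_Fnf_TTpp (f : X -> X) : (0 < n)%N -> TTpp (Fnf (n:=n) f) -> TTpp f.
Proof.
move=> n_gt0 TTF U V oU oV [x Ux] [y Vy].
have upper_set0 W z : W z -> @vietoris_b X n (true, W) !=set0.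
  move=> Wz; exists (exist _ _ (is_Fn_seq (s := [:: z]) isT n_gt0)).
  by move=> w /=; rewrite inE => /eqP ->.
have := TTF _ _ (@vietoris_b_open (true, U) oU) (@vietoris_b_open (true, V) oV)
  (upper_set0 _ _ Ux) (upper_set0 _ _ Vy).
apply: sub_infinite_set => k [k_gt0 [A [UA VA]]]; split => //.
have [[a Aa] _] := proj2_sig A.
exists a; split; first exact: UA.
by move: VA; rewrite /preimage /vietoris_b /= iter_Fnf; apply; exists a.
Qed.

Lemma open_not_in_F1 : hausdorff_space X -> open [set A : Fn X n | ~ in_F1 A].
Proof.
move=> hX; rewrite openE => A notF1A.
have [a Aa] := (proj2_sig A).1.
have [b Ab ba] : exists2 b, proj1_sig A b & b != a.
  apply: contrapT => onlya; apply: notF1A; exists a.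
  apply/seteqP; split=> [z Az|z /= ->//].
  by apply: contrapT => za; apply: onlya; exists z => //; apply/eqP.
move: hX; rewrite open_hausdorff => /(_ b a ba) [[Ob Oa] /= [/set_mem bOb /set_mem aOa]].
move=> [oOb oOa /eqP ObOa0].
apply: (@filterS _ _ _ (@vietoris_b X n (false, Ob) `&` @vietoris_b X n (false, Oa))).
  move=> B [[c [Bc Obc]] [d [Bd Oad]]] [z eB]; rewrite eB /= in Bc Bd; subst c d.
  by have : (Ob `&` Oa) z by []; rewrite ObOa0.
apply: open_nbhs_nbhs; split; last by split; [exists b | exists a].
by apply: openI; apply: (@vietoris_b_open (false, _)).
Qed.

Lemma vietoris_nbhs_set1 (U : set (Fn X n)) (A : Fn X n) (x : X) :
  open U -> U A -> proj1_sig A = [set x] ->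
  exists2 O : set X, nbhs x O & forall B : Fn X n, proj1_sig B `<=` O -> U B.
Proof.
case=> E sE eU UA eA; move: UA; rewrite -eU => -[W EW WA].
have [D sD eW] := sE W EW.
exists (\bigcap_(i in [set` D]) i.2).
  apply: filter_bigI => i Di; apply: open_nbhs_nbhs.
  split; first exact: set_mem (sD _ Di).
  move: WA; rewrite -eW => /(_ _ Di); case: i {Di} => -[] O /=; rewrite /vietoris_b /= eA.
    by apply.
  by case=> _ [-> ].
move=> B BO; exists W => //; change (W B).
rewrite -eW => -[[] O] Di /=; rewrite /vietoris_b /=.
  by move=> z /BO /(_ _ Di).
by have [b Bb] := (proj2_sig B).1; exists b; split => //; apply: BO Bb _ Di.
Qed.

Lemma exists_not_in_F1 (U : set (Fn X n)) (A : Fn X n) :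
  perfect_set [set: X] -> (2 <= n)%N -> open U -> U A -> exists2 B, U B & ~ in_F1 B.
Proof.
move=> [_ perfX] n_ge2 oU UA.
have [[x eA]|] := pselect (in_F1 A); last by exists A.
have [O xO OU] := vietoris_nbhs_set1 oU UA eA.
have : limit_point [set: X] x by rewrite perfX.
move=> /(_ _ xO) [y [yx _ Oy]].
exists (exist _ _ (is_Fn_seq (s := [:: x; y]) isT n_ge2)).
  by apply: OU => z /=; rewrite !inE => /orP[] /eqP ->; first exact: nbhs_singleton.
case=> z /= exy.
have xy : [set` [:: x; y]] x /\ [set` [:: x; y]] y by rewrite /= !inE !eqxx orbT.
by move: xy yx; rewrite exy => -[/= -> ->]; rewrite eqxx.
Qed.
End Vietoris.

Section Collapse.
Variables (X : topologicalType) (n : nat).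
Local Notation q := (\pi_(SFn X n)).

Lemma eq_pi (A B : Fn X n) : q A = q B <-> collapse_rel A B.
Proof. by split=> /(eqmodP (@collapse_equiv_rel X n)). Qed.

Lemma in_F1_Fnf (f : X -> X) (A : Fn X n) : in_F1 A -> in_F1 (Fnf f A).
Proof. by case=> x eA; exists (f x); rewrite /= eA image_set1. Qed.

Lemma SFnf_pi (f : X -> X) (A : Fn X n) : SFnf f (q A) = q (Fnf f A).
Proof.
have /asboolP[eA|[F1A' F1A]] : collapse_rel (repr (q A)) A by apply/eq_pi; rewrite reprK.
  rewrite /SFnf eA; case: asboolP => [F1A|//].
  by apply/eq_pi/asboolP; right; split => //; exact: in_F1_Fnf.
rewrite /SFnf asboolT //.
by apply/eq_pi/asboolP; right; split => //; exact: in_F1_Fnf.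
Qed.

Lemma iter_SFnf (f : X -> X) k (A : Fn X n) :
  iter k (SFnf f) (q A) = q (iter k (Fnf f) A).
Proof. by elim: k => [|k /= ->]; rewrite ?SFnf_pi. Qed.

Lemma open_pi_not_in_F1 (W : set (Fn X n)) : hausdorff_space X -> open W ->
  open (q @` (W `&` [set A | ~ in_F1 A]) : set (SFn X n)).
Proof.
move=> hX oW; set W' := W `&` _.
have saturated : q @^-1` (q @` W') = W'.
  by apply/seteqP; split=> [C [D [WD F1D] /eq_pi /asboolP [<-//|[]//]]|C W'C]; exists C.
change (open (q @^-1` (q @` W'))); rewrite saturated.
by apply: openI => //; exact: open_not_in_F1.
Qed.

Lemma TTpp_Fnf_SFnf (f : X -> X) : TTpp (Fnf (n:=n) f) -> TTpp (SFnf (n:=n) f).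
Proof.
move=> TTF U V oU oV [u Uu] [v Vv].
have := TTF (q @^-1` U) (q @^-1` V) oU oV.
move=> /(_ (ex_intro _ (repr u) _) (ex_intro _ (repr v) _)).
rewrite /= !reprK => /(_ Uu Vv).
apply: sub_infinite_set => k [k_gt0 [A [UA VA]]]; split => //.
by exists (q A); split => //; rewrite /preimage /= iter_SFnf.
Qed.

Lemma TTpp_SFnf_Fnf (f : X -> X) : hausdorff_space X -> perfect_set [set: X] ->
  (2 <= n)%N -> TTpp (SFnf (n:=n) f) -> TTpp (Fnf (n:=n) f).
Proof.
move=> hX perfX n_ge2 TTS U V oU oV [A UA] [B VB].
have [A' UA' F1A'] := exists_not_in_F1 perfX n_ge2 oU UA.
have [B' VB' F1B'] := exists_not_in_F1 perfX n_ge2 oV VB.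
have := TTS _ _ (open_pi_not_in_F1 hX oU) (open_pi_not_in_F1 hX oV).
move=> /(_ (ex_intro _ (q A') (ex_intro2 _ _ A' (conj UA' F1A') erefl))).
move=> /(_ (ex_intro _ (q B') (ex_intro2 _ _ B' (conj VB' F1B') erefl))).
apply: sub_infinite_set => k [k_gt0 [_ [[C [UC F1C] <-]]]].
rewrite /preimage /= iter_SFnf => -[D [VD F1D] /eq_pi /asboolP [eD|[]//]].
by split => //; exists C; split => //; rewrite /preimage /= -eD.
Qed.
End Collapse.

Definition flip_shift (x : cantor_space) : cantor_space :=
  fun i => if i is j.+1 then x j.+2 else ~~ x 0%N.

Lemma iter_flip_shift0 k x : iter k flip_shift x 0%N = x 0%N (+) odd k.
Proof. by elim: k => [|k /= ->]; rewrite ?addbF // -addbN. Qed.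

Lemma iter_flip_shiftS k x j : iter k flip_shift x j.+1 = x (j.+1 + k)%N.
Proof. by elim: k j => [|k IH] j /=; rewrite ?addn0 // IH addSn addnS. Qed.

Definition splice (x y : cantor_space) (N k : nat) : cantor_space :=
  fun i => if (i <= N)%N then x i else y (i - k)%N.

Lemma iter_flip_shift_splice (x y : cantor_space) N k :
  (N < k)%N -> odd k = x 0%N (+) y 0%N -> iter k flip_shift (splice x y N k) = y.
Proof.
move=> Nk odd_k; apply: functional_extensionality_dep => -[|j].
  by rewrite iter_flip_shift0 odd_k /splice leq0n addbA addbb.
by rewrite iter_flip_shiftS /splice ifN ?addnK // -ltnNge ltn_addl.
Qed.

Lemma cvg_splice (x y : cantor_space) (k : nat -> nat) :
  (fun N => splice x y N (k N)) @ \oo --> x.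
Proof.
apply/pointwise_cvgP => i; apply: (@cvg_near_cst _ _ (x i)).
by exists i => // N /= iN; rewrite /splice iN.
Qed.

Lemma TTpp_flip_shift : TTpp flip_shift.
Proof.
move=> U V oU oV [x Ux] [y Vy].
pose k N := ((x 0%N (+) y 0%N) + N.+1.*2)%N.
have [N0 _ spliceU] := @cvg_splice x y k _ (open_nbhs_nbhs (conj oU Ux)).
apply: infinite_set_unbounded => M; exists (k (maxn N0 M)); first by rewrite /k; lia.
split; first by rewrite /k; lia.
exists (splice x y (maxn N0 M) (k (maxn N0 M))); split.
  by apply: spliceU; rewrite /= leq_maxl.
rewrite /preimage /= iter_flip_shift_splice //; first by rewrite /k; lia.
by rewrite /k oddD odd_double addbF oddb.
Qed.

Lemma compactum_cantor_space : compactum cantor_space.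
Proof.
split; [exact: cantor_space_compact | exact: cantor_space_hausdorff
       | exact: cantor_perfect | ].
by exists (fun=> true), (fun=> false) => /(congr1 (fun z : cantor_space => z 0%N)).
Qed.

Lemma open_coord0 (b : bool) : open [set z : cantor_space | z 0%N = b].
Proof.
have coord0_cts : continuous (fun z : cantor_space => z 0%N) :=
  @proj_continuous nat (fun=> bool) 0%N.
exact: (proj1 (continuousP _) coord0_cts [set b] (discrete_open _)).
Qed.

Lemma not_TTpp_Fnf_flip_shift n : (2 <= n)%N -> ~ TTpp (Fnf (n:=n) flip_shift).
Proof.
move=> n_ge2 TTF.
pose C b := [set z : cantor_space | z 0%N = b].
pose zero : cantor_space := fun=> false.
pose one : cantor_space := fun=> true.
have := TTF (@vietoris_b _ n (true, C false))
  (@vietoris_b _ n (false, C false) `&` @vietoris_b _ n (false, C true))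
  (@vietoris_b_open _ n (true, C false) (open_coord0 false))
  (openI (@vietoris_b_open _ n (false, C false) (open_coord0 false))
         (@vietoris_b_open _ n (false, C true) (open_coord0 true))).
pose A0 : Fn _ n := exist _ _ (is_Fn_seq (s := [:: zero]) isT (ltnW n_ge2)).
pose A01 : Fn _ n := exist _ _ (is_Fn_seq (s := [:: zero; one]) isT n_ge2).
have A0_sub : @vietoris_b _ n (true, C false) A0 by move=> z /=; rewrite inE => /eqP ->.
have A01_meets : (@vietoris_b _ n (false, C false) `&` @vietoris_b _ n (false, C true)) A01.
  by split; [exists zero | exists one]; rewrite /= !inE eqxx ?orbT.
move=> /(_ (ex_intro _ _ A0_sub) (ex_intro _ _ A01_meets)).
move=> /infinite_setN0 [k [_ [A [AC0 []]]]]; rewrite /preimage /vietoris_b /= !iter_Fnf.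
move=> [_ [[a Aa <-] Ca]] [_ [[b Ab <-] Cb]].
by move: Ca Cb; rewrite /C /= !iter_flip_shift0 (AC0 _ Aa) (AC0 _ Ab) => ->.
Qed.

Theorem theorem20 :
  (forall (X : topologicalType) (n : nat) (f : X -> X),
     compactum X -> (2 <= n)%N ->
     ((TTpp (Fnf (n:=n) f) <-> TTpp (SFnf (n:=n) f)) /\
      (TTpp (Fnf (n:=n) f) -> TTpp f))) /\
  (exists (X : topologicalType) (n : nat) (f : X -> X),
     [/\ compactum X, (2 <= n)%N, TTpp f & ~ TTpp (Fnf (n:=n) f)]).
Proof.
split=> [X n f [_ hX perfX _] n_ge2|].
  split; first by split; [exact: TTpp_Fnf_SFnf | exact: TTpp_SFnf_Fnf].
  by apply: TTpp_Fnf_TTpp; apply: ltnW.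
exists cantor_space, 2%N, flip_shift; split => //.
- exact: compactum_cantor_space.
- exact: TTpp_flip_shift.
- exact: not_TTpp_Fnf_flip_shift.
Qed.
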